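(* Let $r\ge 3$ and let $T=T_0\oplus T_1$ be a finite-dimensional nilpotent module over the preprojective algebra $\Lambda$ of the graph with two vertices $0,1$ joined by $r$ edges, with graded socle filtration $0=U_0\subset U_1\subset U_2\subset\cdots$. Suppose $1\le j<k$ with $k-j$ even, and suppose the subquotient $U_k/U_j$ has a submodule of dimension vector $a\,\alpha_j+b\,\alpha_{j+1}$. Then $U_{k-1}/U_{j-1}$ has a submodule of dimension vector $b\,\alpha_{j+1}+c\,\alpha_j$ for some integer $c\le rb-a$. If moreover $j\ge 2$, then $c\ge b/r$.
   Context: Setup: $r\ge3$, $I=\{0,1\}$, Cartan matrix $\begin{pmatrix}2&-r\\-r&2\end{pmatrix}$, simple roots $\alpha_0,\alpha_1$. The graph has vertices $0,1$ and $r$ edges between them; the double quiver has arrows $0\to1$ and $1\to0$, one of each per edge, $\bar a$ denoting the reverse of $a$. Fix an orientation $\Omega$ (one arrow per edge), $\varepsilon(a)=\pm1$ according to $a\in\Omega$ or not. $\Lambda$ is the path algebra modulo the ideal generated by $\sum_a\varepsilon(a)\bar a a$. A $\Lambda$-module $T=T_0\oplus T_1$ is given by linear maps $x_a:T_{s(a)}\to T_{t(a)}$ for each arrow; nilpotent means all long enough paths act by $0$. The dimension vector of a graded module $S$ is $\dim S_0\,\alpha_0+\dim S_1\,\alpha_1$. For an index $k\ge1$, write $\alpha_k=\alpha_1$ if $k$ is odd and $\alpha_k=\alpha_0$ if $k$ is even, and similarly the vertex of $k$ is $1$ for $k$ odd, $0$ for $k$ even. The graded socle filtration is defined by $U_0=0$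 and, for $k\ge1$ with vertex $i$, $U_k=U_{k-1}+\{v\in T_i: x_a(v)\in U_{k-1}\text{ for all arrows }a\text{ with }s(a)=i\}$ (so $U_1=\mathrm{Soc}(T)\cap T_1$). Each $U_k$ is a submodule. *)

From HB Require Import structures.
From mathcomp Require Import all_boot all_order all_algebra.
Set Implicit Arguments. Unset Strict Implicit. Unset Printing Implicit Defensive.
Import GRing.Theory.
Local Open Scope ring_scope.

(* Representation of a graded module T = T_0 (+) T_1 over the double quiver of
   the graph with vertices 0,1 and r edges, over a field K.
   Vectors are ROW vectors: T_0 = 'rV_n0, T_1 = 'rV_n1, and a linear map
   T_i -> T_j is a matrix 'M_(n_i, n_j) acting by v |-> v *m M.
   For an edge e : 'I_r,
     A e : 'M_(n0,n1) is x_{a_e} for the arrow a_e : 0 -> 1 of e,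
     B e : 'M_(n1,n0) is x_{abar_e} for the reverse arrow abar_e : 1 -> 0.
   The orientation Omega is given by  orient : 'I_r -> bool,  where
   orient e = true iff a_e \in Omega (otherwise abar_e \in Omega). *)

Section Defs.
Variables (K : fieldType) (r n0 n1 : nat).
Variables (orient : 'I_r -> bool)
          (A : 'I_r -> 'M[K]_(n0, n1)) (B : 'I_r -> 'M[K]_(n1, n0)).

Definition eps_fwd (e : 'I_r) : K := if orient e then 1 else -1.
Definition eps_bwd (e : 'I_r) : K := - eps_fwd e.

(* The preprojective relation  sum_a eps(a) abar a = 0, split by vertex:
   at vertex 0 the arrows a starting there are the a_e (abar = abar_e), the
   path "abar a" acts by v |-> (v *m A e) *m B e;
   at vertex 1 the arrows a starting there are the abar_e (reverse a_e). *)
Definition preproj_rel : Prop :=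
  \sum_(e < r) eps_fwd e *: (A e *m B e) = 0 /\
  \sum_(e < r) eps_bwd e *: (B e *m A e) = 0.

(* Arrows of the double quiver: (e, true) = a_e : 0 -> 1, (e, false) = abar_e.
   On the total space T_0 (+) T_1 = 'rV_(n0 + n1) an arrow acts by a block
   matrix; a product of such matrices is the action of the corresponding
   path (and is 0 if the arrows are not composable). *)
Definition arrow_mx (x : 'I_r * bool) : 'M[K]_(n0 + n1) :=
  if x.2 then block_mx 0 (A x.1) 0 0 else block_mx 0 0 (B x.1) 0.

Definition nilpotent_rep : Prop :=
  exists N : nat, forall s : seq ('I_r * bool), size s = N ->
    foldr (fun x M => arrow_mx x *m M) 1%:M s = 0.

(* Graded subspaces of T, as pairs of row-spaces (S_0, S_1). *)
Definition gsub := ('M[K]_n0 * 'M[K]_n1)%type.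

Definition submod (S : gsub) : Prop :=
  forall e : 'I_r, (S.1 *m A e <= S.2)%MS /\ (S.2 *m B e <= S.1)%MS.

Definition gsubset (S S' : gsub) : Prop := (S.1 <= S'.1)%MS /\ (S.2 <= S'.2)%MS.

(* Vertex of an index k >= 1: true (= vertex 1) if k odd, false (= vertex 0)
   if k even. *)
Definition vert (k : nat) : bool := odd k.

Definition gdim (i : bool) (S : gsub) : nat :=
  if i then \rank S.2 else \rank S.1.

(* {v in T_0 : v *m A e \in W for all e}  and {v in T_1 : v *m B e \in W for all e} *)
Definition pre0 (W : 'M[K]_n1) : 'M[K]_n0 :=
  (\bigcap_(e < r) kermx (A e *m cokermx W))%MS.
Definition pre1 (W : 'M[K]_n0) : 'M[K]_n1 :=
  (\bigcap_(e < r) kermx (B e *m cokermx W))%MS.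

Fixpoint socle_filt (k : nat) : gsub :=
  match k with
  | 0 => (0, 0)
  | k'.+1 =>
      let U := socle_filt k' in
      if vert k'.+1 then (U.1, (U.2 + pre1 U.1)%MS)
      else ((U.1 + pre0 U.2)%MS, U.2)
  end.

Lemma pre0P (W : 'M[K]_n1) (v : 'rV[K]_n0) :
  reflect (forall e, (v *m A e <= W)%MS) (v <= pre0 W)%MS.
Proof.
apply: (iffP sub_bigcapmxP) => H e.
  by move: (H e isT) => /sub_kermxP; rewrite mulmxA submxE => /eqP.
by move: (H e); rewrite submxE => /eqP He _; apply/sub_kermxP; rewrite mulmxA.
Qed.

Lemma pre1P (W : 'M[K]_n0) (v : 'rV[K]_n1) :
  reflect (forall e, (v *m B e <= W)%MS) (v <= pre1 W)%MS.
Proof.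
apply: (iffP sub_bigcapmxP) => H e.
  by move: (H e isT) => /sub_kermxP; rewrite mulmxA submxE => /eqP.
by move: (H e); rewrite submxE => /eqP He _; apply/sub_kermxP; rewrite mulmxA.
Qed.

End Defs.

From HB Require Import structures.
From mathcomp Require Import all_boot all_order all_algebra.
From mathcomp Require Import zify.
Set Implicit Arguments. Unset Strict Implicit. Unset Printing Implicit Defensive.
Import GRing.Theory.

(** Let p be the vertex of j and q the other vertex, so that U_j and U_{j-1}
    agree at q, and take S' := U_{j-1} + (images of S_q under the arrows from q),
    which equals S_q at q.  The arrows out of p induce a map
    S_p / U_{j,p} -> (S_q / U_{j-1,q})^r, injective because U_j is cut out by
    a preimage condition; the reverse arrows, weighted by the signs eps, induce
    a map (S_q / U_{j-1,q})^r -> S'_p / U_{j-1,p} onto.  The preprojective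
    relation makes the composite zero, so a + c <= r b.  For j >= 2, U_{j-1} is
    itself cut out at q by a preimage condition over U_{j-2,p} = U_{j-1,p}, so
    the reverse arrows give an injection S_q / U_{j-1,q} -> (S'_p / U_{j-1,p})^r
    and b <= r c.  The case of odd j
    is reduced to even j by exchanging the two vertices. *)

Section RankInequalities.
Local Open Scope ring_scope.
Variable F : fieldType.

Lemma mxrank_mul_cokermx m n p (M : 'M[F]_(m, n)) (Q : 'M[F]_(p, n)) :
  \rank (M *m cokermx Q) = (\rank (M + Q)%MS - \rank Q)%N.
Proof.
have kerQ : (M :&: kermx (cokermx Q) :=: M :&: Q)%MS.
  by apply: cap_eqmx => //; apply/eqmxP/rV_eqP => v; rewrite sub_kermx submxE.
have := mxrank_mul_ker M (cokermx Q); rewrite kerQ.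
have := mxrank_sum_cap M Q; lia.
Qed.

Lemma mxrank_quot_le_image m n p (S P : 'M[F]_m) (f : 'M[F]_(m, n)) (Q : 'M[F]_(p, n)) :
  (kermx (f *m cokermx Q) <= P)%MS ->
  (\rank S - \rank P <= \rank (S *m f + Q)%MS - \rank Q)%N.
Proof.
move=> kerP; rewrite -mxrank_mul_cokermx -mulmxA.
have := mxrank_mul_ker S (f *m cokermx Q).
have := mxrankS (submx_trans (capmxSr S _) kerP); lia.
Qed.

Lemma mxrank_complex_quot m n p (Sp P' : 'M[F]_m) (Sq Q : 'M[F]_n) (P : 'M[F]_p)
    (f : 'M[F]_(m, n)) (g : 'M[F]_(n, p)) :
  (Sp *m f <= Sq)%MS -> (Q <= Sq)%MS -> f *m g = 0 -> (Q *m g <= P)%MS ->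
  (kermx (f *m cokermx Q) <= P')%MS ->
  (\rank (Sq *m g + P)%MS - \rank P + (\rank Sp - \rank P')
     <= \rank Sq - \rank Q)%N.
Proof.
move=> SpSq QSq fg0 QgP kerP'.
have image_in_ker : (Sp *m f + Q <= Sq :&: kermx (g *m cokermx P))%MS.
  rewrite sub_capmx addsmx_sub SpSq QSq addsmx_sub !sub_kermx.
  by rewrite mulmxA -(mulmxA Sp) fg0 mulmx0 mul0mx eqxx mulmxA -submxE.
have := mxrank_mul_ker Sq (g *m cokermx P).
rewrite mulmxA mxrank_mul_cokermx.
have := mxrankS image_in_ker; have := mxrank_quot_le_image Sp kerP'.
have := mxrankS (addsmxSr (Sp *m f) Q); have := mxrankS (addsmxSr (Sq *m g) P).
lia.
Qed.

End RankInequalities.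

Section BlockDiagonal.
Local Open Scope ring_scope.
Variables (F : fieldType) (n : nat) (p_ : 'I_n -> nat).

Lemma submx_mxdiagP m (M : 'M[F]_(m, \sum_i p_ i)) (D : forall i, 'M[F]_(p_ i)) :
  (M <= \mxdiag_i D i)%MS <-> (forall i, submxrow M i <= D i)%MS.
Proof.
split=> [/submxP[W ->] i | subM].
  by rewrite -(submxrowK W) mul_mxrow_mxdiag mxrowK submxMl.
rewrite -(submxrowK M).
have -> : \mxrow_i submxrow M i = \mxrow_i (submxrow M i *m pinvmx (D i) *m D i).
  by apply: eq_mxrow => i; rewrite mulmxKpV.
by rewrite -mul_mxrow_mxdiag submxMl.
Qed.

Lemma mxdiagS (D D' : forall i, 'M[F]_(p_ i)) :
  (forall i, D i <= D' i)%MS -> (\mxdiag_i D i <= \mxdiag_i D' i)%MS.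
Proof.
move=> DD'; apply/submx_mxdiagP => i; apply: submx_trans (DD' i).
by move: (submx_refl (\mxdiag_i D i)) => /submx_mxdiagP.
Qed.

Lemma mxrank_mxdiag_const m (S : 'M[F]_m) : \rank (\mxdiag_(i < n) S) = (n * \rank S)%N.
Proof. by rewrite rank_mxdiag sum_nat_const card_ord. Qed.

End BlockDiagonal.

Section Preimages.
Local Open Scope ring_scope.
Variables (F : fieldType) (r m n : nat) (X : 'I_r -> 'M[F]_(m, n)).

Lemma sub_pre0P (W : 'M[F]_n) k (v : 'M[F]_(k, m)) :
  (v <= pre0 X W)%MS <-> (forall e, v *m X e <= W)%MS.
Proof.
split=> [/sub_bigcapmxP sub e | sub].
  by move: (sub e isT) => /sub_kermxP; rewrite mulmxA submxE => /eqP.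
apply/sub_bigcapmxP => e _.
by move: (sub e); rewrite submxE => /eqP ve; apply/sub_kermxP; rewrite mulmxA.
Qed.

Lemma pre0_mulmx_sub (W : 'M[F]_n) e : (pre0 X W *m X e <= W)%MS.
Proof. by move: (submx_refl (pre0 X W)) => /sub_pre0P. Qed.

Lemma kermx_mxrow_sub_pre0 (Q : 'M[F]_n) :
  (kermx (\mxrow_e X e *m cokermx (\mxdiag_(e < r) Q)) <= pre0 X Q)%MS.
Proof.
apply/sub_pre0P => e; set L := kermx _.
have : (L *m \mxrow_e X e <= \mxdiag_(e < r) Q)%MS.
  by rewrite submxE -mulmxA mulmx_ker.
by rewrite mul_mxrow => /submx_mxdiagP /(_ e); rewrite mxrowK.
Qed.

End Preimages.

Section ArrowImages.
Local Open Scope ring_scope.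
Variables (F : fieldType) (r np nq : nat).
Implicit Types (X : 'I_r -> 'M[F]_(np, nq)) (Y : 'I_r -> 'M[F]_(nq, np)).

Definition arrow_img Y (S : 'M[F]_nq) : 'M[F]_np := (\sum_(e < r) <<S *m Y e>>)%MS.

Lemma arrow_img_subP Y S m (W : 'M[F]_(m, np)) :
  (arrow_img Y S <= W)%MS <-> (forall e, S *m Y e <= W)%MS.
Proof.
split=> [/sumsmx_subP sub e | sub]; last by apply/sumsmx_subP => e _; rewrite genmxE.
by rewrite -genmxE sub.
Qed.

Lemma arrow_img_sup Y S e : (S *m Y e <= arrow_img Y S)%MS.
Proof. by move: (submx_refl (arrow_img Y S)) => /arrow_img_subP. Qed.

Lemma mxrank_arrow_img_quot_add X Y (eps : 'I_r -> F)
    (Sp P' P : 'M[F]_np) (Sq Q : 'M[F]_nq) :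
  (forall e, eps e != 0) -> \sum_(e < r) eps e *: (X e *m Y e) = 0 ->
  (forall e, Sp *m X e <= Sq)%MS -> (Q <= Sq)%MS -> (forall e, Q *m Y e <= P)%MS ->
  (pre0 X Q <= P')%MS ->
  (\rank (P + arrow_img Y Sq)%MS - \rank P + (\rank Sp - \rank P')
     <= r * (\rank Sq - \rank Q))%N.
Proof.
move=> eps_neq0 rel SpSq QSq QYP preP'.
pose g := \mxcol_(e < r) (eps e *: Y e).
have img_g : (\mxdiag_(e < r) Sq *m g :=: arrow_img Y Sq)%MS.
  rewrite mul_mxdiag_mxcol /arrow_img; apply: eqmx_trans (eqmx_col _) _.
  apply: eqmx_sums => e _ /=; rewrite -scalemxAr (eq_genmx (eqmx_scale _ (eps_neq0 e))).
  exact: eqmx_refl.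
have := @mxrank_complex_quot _ _ _ _ Sp P' (\mxdiag_(e < r) Sq) (\mxdiag_(e < r) Q) P
  (\mxrow_e X e) g.
rewrite (adds_eqmx img_g (eqmx_refl P)) addsmxC !mxrank_mxdiag_const -mulnBr; apply.
- by rewrite mul_mxrow; apply/submx_mxdiagP => e; rewrite mxrowK.
- exact: mxdiagS.
- rewrite mul_mxrow_mxcol -[RHS]rel; apply: eq_bigr => e _; by rewrite scalemxAr.
- rewrite mul_mxdiag_mxcol eqmx_col; apply/sumsmx_subP => e _.
  by rewrite genmxE -scalemxAr scalemx_sub.
- exact: submx_trans (kermx_mxrow_sub_pre0 X Q) preP'.
Qed.

Lemma mxrank_quot_le_arrow_img Y (P : 'M[F]_np) (Sq Q : 'M[F]_nq) :
  (pre0 Y P <= Q)%MS ->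
  (\rank Sq - \rank Q <= r * (\rank (P + arrow_img Y Sq)%MS - \rank P))%N.
Proof.
move=> preQ.
have := mxrank_quot_le_image Sq (submx_trans (kermx_mxrow_sub_pre0 Y P) preQ).
have image_sub : (Sq *m \mxrow_e Y e + \mxdiag_(e < r) P
                   <= \mxdiag_(e < r) (P + arrow_img Y Sq))%MS.
  rewrite addsmx_sub mxdiagS ?andbT => [|e]; last exact: addsmxSl.
  rewrite mul_mxrow; apply/submx_mxdiagP => e; rewrite mxrowK.
  exact: submx_trans (arrow_img_sup Y Sq e) (addsmxSr _ _).
have := mxrankS image_sub; rewrite !mxrank_mxdiag_const mulnBr; lia.
Qed.

End ArrowImages.

Section SocleFiltration.
Variables (K : fieldType) (r n0 n1 : nat).
Variables (A : 'I_r -> 'M[K]_(n0, n1)) (B : 'I_r -> 'M[K]_(n1, n0)).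
Local Notation U := (socle_filt A B).

Lemma socle_filtS k :
  U k.+1 = if odd k.+1 then ((U k).1, ((U k).2 + pre1 B (U k).1)%MS)
           else (((U k).1 + pre0 A (U k).2)%MS, (U k).2).
Proof. by []. Qed.

Lemma socle_filt_submod k : submod A B (U k).
Proof.
elim: k => [e|k IHk e]; first by rewrite /= !mul0mx !sub0mx.
have [UA UB] := IHk e; rewrite socle_filtS; case: ifP => _ /=; split.
- exact: submx_trans UA (addsmxSl _ _).
- by rewrite addsmxMr addsmx_sub UB pre0_mulmx_sub.
- by rewrite addsmxMr addsmx_sub UA pre0_mulmx_sub.
- exact: submx_trans UB (addsmxSl _ _).
Qed.

Lemma socle_filt_mono k l : k <= l -> gsubset (U k) (U l).
Proof.
move=> /subnKC <-; elim: (l - k) => [|d [IH1 IH2]]; first by rewrite addn0.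
rewrite addnS socle_filtS; case: ifP => _ /=; split=> //;
  exact: submx_trans (addsmxSl _ _).
Qed.

Lemma socle_filt_pre k : 0 < k ->
  if odd k then (pre1 B (U k).1 <= (U k).2)%MS else (pre0 A (U k).2 <= (U k).1)%MS.
Proof.
by case: k => // k _; rewrite socle_filtS /=; case: (odd k); rewrite /= addsmxSr.
Qed.

End SocleFiltration.

Section LowerSubmodule.
Local Open Scope ring_scope.
Variables (K : fieldType) (r n0 n1 : nat).
Variables (A : 'I_r -> 'M[K]_(n0, n1)) (B : 'I_r -> 'M[K]_(n1, n0)).
Implicit Types U V S : gsub K n0 n1.

Definition lower_sub U S : gsub K n0 n1 := ((U.1 + arrow_img B S.2)%MS, S.2).

Lemma lower_sub_submod U S :
  gsubset U S -> submod A B S -> submod A B (lower_sub U S).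
Proof.
move=> [US1 _] subS e; have [SA SB] := subS e; split=> /=.
  rewrite addsmxMr addsmx_sub (submx_trans (submxMr _ US1) SA) /=.
  apply: submx_trans (submxMr _ _) SA.
  by apply/arrow_img_subP => e'; have [] := subS e'.
exact: submx_trans (arrow_img_sup B S.2 e) (addsmxSr _ _).
Qed.

Lemma lower_subP (eps : 'I_r -> K) U V S :
  (forall e, eps e != 0) -> \sum_(e < r) eps e *: (A e *m B e) = 0 ->
  submod A B U -> submod A B V -> gsubset U V -> submod A B S ->
  gsubset ((U.1 + pre0 A U.2)%MS, U.2) S -> (S.2 <= V.2)%MS ->
  let S' := lower_sub U S in
  [/\ submod A B S', gsubset U S', gsubset S' V,
      (\rank S'.1 - \rank U.1 + (\rank S.1 - \rank (U.1 + pre0 A U.2)%MS)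
         <= r * (\rank S.2 - \rank U.2))%N
    & (pre0 B U.1 <= U.2)%MS ->
      (\rank S.2 - \rank U.2 <= r * (\rank S'.1 - \rank U.1))%N].
Proof.
move=> eps_neq0 rel subU subV [UV1 _] subS [UjS1 US2] SV2 S'.
have US1 : (U.1 <= S.1)%MS := submx_trans (addsmxSl _ _) UjS1.
split.
- exact: lower_sub_submod.
- by split; rewrite /= ?addsmxSl.
- split=> //=; rewrite addsmx_sub UV1; apply/arrow_img_subP => e.
  by apply: submx_trans (submxMr _ SV2) _; have [] := subV e.
- apply: mxrank_arrow_img_quot_add eps_neq0 rel _ US2 _ (addsmxSr _ _) => e.
    by have [] := subS e.
  by have [] := subU e.
- exact: mxrank_quot_le_arrow_img.
Qed.

End LowerSubmodule.

Section Swap.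
Variables (K : fieldType) (r n0 n1 : nat).
Variables (A : 'I_r -> 'M[K]_(n0, n1)) (B : 'I_r -> 'M[K]_(n1, n0)).

Definition gswap (S : gsub K n0 n1) : gsub K n1 n0 := (S.2, S.1).

Lemma submod_gswap S : submod A B S -> submod B A (gswap S).
Proof. by move=> subS e; have [] := subS e. Qed.

Lemma gsubset_gswap S S' : gsubset S S' -> gsubset (gswap S) (gswap S').
Proof. by case. Qed.

End Swap.

Lemma eps_fwd_neq0 (K : fieldType) r (orient : 'I_r -> bool) e :
  eps_fwd K orient e != 0%R.
Proof. by rewrite /eps_fwd; case: (orient e); rewrite ?oppr_eq0 oner_eq0. Qed.

Lemma eps_bwd_neq0 (K : fieldType) r (orient : 'I_r -> bool) e :
  eps_bwd K orient e != 0%R.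
Proof. by rewrite /eps_bwd oppr_eq0 eps_fwd_neq0. Qed.

Theorem mainTheorem2 (K : fieldType) (r n0 n1 : nat) (orient : 'I_r -> bool)
    (A : 'I_r -> 'M[K]_(n0, n1)) (B : 'I_r -> 'M[K]_(n1, n0)) :
  3 <= r ->
  preproj_rel orient A B ->
  nilpotent_rep A B ->
  forall (j k a b : nat),
    1 <= j -> j < k -> ~~ odd (k - j) ->
    (exists S : gsub K n0 n1,
        submod A B S /\ gsubset (socle_filt A B j) S /\ gsubset S (socle_filt A B k) /\
        gdim (vert j) S - gdim (vert j) (socle_filt A B j) = a /\
        gdim (vert j.+1) S - gdim (vert j.+1) (socle_filt A B j) = b) ->
    exists (c : nat) (S' : gsub K n0 n1),
        submod A B S' /\ gsubset (socle_filt A B j.-1) S' /\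
        gsubset S' (socle_filt A B k.-1) /\
        gdim (vert j.+1) S' - gdim (vert j.+1) (socle_filt A B j.-1) = b /\
        gdim (vert j) S' - gdim (vert j) (socle_filt A B j.-1) = c /\
        c + a <= r * b /\
        (2 <= j -> b <= r * c).
Proof.
move=> _ [rel0 rel1] _ j k a b j_gt0 lt_jk even_kj [S [subS [UjS [SUk [<- <-]]]]].
case: j j_gt0 lt_jk even_kj UjS => // j _ lt_jk even_kj.
case: k lt_jk even_kj SUk => // k lt_jk even_kj.
have odd_k : odd k = odd j.
  by move: even_kj; rewrite (oddB (ltnW lt_jk)) /=; case: (odd k); case: (odd j).
rewrite !socle_filtS /= odd_k /gdim /vert /=.
set U := socle_filt A B j.
have subU := socle_filt_submod A B j; have subV := socle_filt_submod A B k.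
have UV := socle_filt_mono A B (ltnW (lt_jk : j < k)).
case: (odd j) (socle_filt_pre A B (k := j)) => /= preU [SUk1 SUk2] UjS.
- have [subS' US' S'V bound_a bound_b] := lower_subP (eps_fwd_neq0 K orient) rel0
    subU subV UV subS UjS SUk2.
  exists (\rank (lower_sub B U S).1 - \rank U.1), (lower_sub B U S).
  by do !split=> //; move=> /preU /bound_b.
- have [subS' US' S'V bound_a bound_b] := lower_subP (eps_bwd_neq0 K orient) rel1
    (submod_gswap subU) (submod_gswap subV) (gsubset_gswap UV) (submod_gswap subS)
    (gsubset_gswap UjS) SUk1.
  exists (\rank (lower_sub A (gswap U) (gswap S)).1 - \rank U.2).
  exists (gswap (lower_sub A (gswap U) (gswap S))).
  split; first exact: submod_gswap subS'.
  split; first exact: gsubset_gswap US'.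
  split; first exact: gsubset_gswap S'V.
  by do !split=> //; move=> /preU /bound_b.
Qed.
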